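(* Let $W_1,\dots,W_{15}$ be $15$ mutually unbiased weighing matrices of order $16$ and weight $9$. Let $Y\subset\mathbb{R}^{16}$ be the set of row vectors of $I_{16},\frac13W_1,\dots,\frac13W_{15}$ (so $|Y|=256$). Then the graph with vertex set $Y$ in which two distinct vectors are adjacent if and only if they are orthogonal is a strongly regular graph with parameters $(256,120,56,56)$.
   Context: A weighing matrix of order $n$ and weight $k$ is an $n\times n$ matrix $W$ with entries in $\{1,-1,0\}$ such that $WW^T=kI_n$. Two weighing matrices $W_1,W_2$ of order $n$ and weight $k$ are unbiased if $\frac{1}{\sqrt{k}}W_1W_2^T$ is also a weighing matrix of order $n$ and weight $k$; a set is mutually unbiased if any two distinct members are unbiased. A strongly regular graph with parameters $(v,k,\lambda,\mu)$ is a $k$-regular graph on $v$ vertices in which any two adjacent vertices have exactly $\lambda$ common neighbours and any two distinct non-adjacent vertices have exactly $\mu$ common neighbours. *)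

From HB Require Import structures.
From mathcomp Require Import all_boot all_order all_algebra.
Set Implicit Arguments. Unset Strict Implicit. Unset Printing Implicit Defensive.
Import Order.TTheory GRing.Theory Num.Theory.
Local Open Scope ring_scope.

Definition is_weighing (R : numDomainType) (n k : nat) (W : 'M[R]_n) : Prop :=
  (forall i j, W i j \in [:: 1; -1; 0]) /\ W *m W^T = (k%:R)%:M.

Definition unbiased (R : rcfType) (n k : nat) (W1 W2 : 'M[R]_n) : Prop :=
  is_weighing k ((Num.sqrt (k%:R : R))^-1 *: (W1 *m W2^T)).

Definition mutually_unbiased_weighing (R : rcfType) (m n k : nat)
    (W : 'I_m -> 'M[R]_n) : Prop :=
  (forall i, is_weighing k (W i)) /\
  (forall i j, i != j -> unbiased k (W i) (W j)).

Definition dotv (R : pzRingType) (n : nat) (u v : 'rV[R]_n) : R := (u *m v^T) 0 0.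

Definition srg (T : finType) (e : rel T) (v k lam mu : nat) : Prop :=
  [/\ (forall x, ~~ e x x), (forall x y, e x y = e y x),
      #|T| = v,
      (forall x, #|[set y | e x y]| = k) &
      (forall x y, x != y ->
         #|[set z | e x z && e y z]| = (if e x y then lam else mu))].

(* Index set of the 256 vectors: rows of I_16, then rows of (1/3) W_i. *)
Definition Yidx := ('I_16 + ('I_15 * 'I_16))%type.

Definition Yvec (R : fieldType) (W : 'I_15 -> 'M[R]_16) (x : Yidx) : 'rV[R]_16 :=
  match x with
  | inl r => row r (1%:M : 'M[R]_16)
  | inr (i, r) => row r ((3%:R)^-1 *: W i)
  end.

Definition Yorth (R : fieldType) (W : 'I_15 -> 'M[R]_16) : rel Yidx :=
  fun x y => (Yvec W x != Yvec W y) && (dotv (Yvec W x) (Yvec W y) == 0).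

Arguments mutually_unbiased_weighing {R} m n k W.
Arguments is_weighing {R} n k W.
Arguments unbiased {R} n k W1 W2.

From HB Require Import structures.
From mathcomp Require Import all_boot all_order all_algebra.
From mathcomp Require Import ring.
Set Implicit Arguments. Unset Strict Implicit. Unset Printing Implicit Defensive.
Import Order.TTheory GRing.Theory Num.Theory.
Local Open Scope ring_scope.

(* The vectors of Y are unit vectors, and two distinct ones have inner product 0 or +-1/3, so
   for distinct y, z the adjacency indicator is 1 - 9 <y,z>^2.  Since W_i W_i^T = 9 I, each W_i/3
   is orthogonal and Y is a union of sixteen orthonormal bases: sum_(z in Y) <z,u>^2 = 16 |u|^2.
   This fixes sum_(y,z) <y,z>^4, and its value is exactly the one at which the square norm of
   sum_z z(x)z(x)z(x)z - c Iso (c = 8/9, Iso the orthogonally invariant 4-tensor) vanishes; hence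
   Y is a spherical 4-design: sum_z <z,u>^2 <z,u'>^2 = 8/9 (|u|^2 |u'|^2 + 2 <u,u'>^2).  Degrees
   and numbers of common neighbours are sums over Y of polynomials of degree at most 4 in inner
   products, which these two identities evaluate. *)

Lemma sum_delta (R : pzSemiRingType) (T : finType) (a : T) (F : T -> R) :
  \sum_b (b == a)%:R * F b = F a.
Proof.
rewrite -[RHS](big_pred1_eq +%R a F) big_mkcond /=.
by apply: eq_bigr => b _; rewrite mulr_natl mulrb.
Qed.

Lemma sum_delta1 (R : pzSemiRingType) (T : finType) (a : T) :
  \sum_b (b == a)%:R = 1 :> R.
Proof. by rewrite -[RHS](sum_delta a (fun=> 1)); apply: eq_bigr => b _; rewrite mulr1. Qed.

Lemma sum_pair (R : pzSemiRingType) (I J : finType) (F : I * J -> R) :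
  \sum_p F p = \sum_a \sum_b F (a, b).
Proof. by rewrite pair_big; apply: eq_bigr => -[]. Qed.

Lemma natr_card_set (R : pzSemiRingType) (T : finType) (P : pred T) :
  #|[set y | P y]|%:R = \sum_y (P y)%:R :> R.
Proof.
rewrite -sum1_card natr_sum big_mkcond /=; apply: eq_bigr => y _.
by rewrite inE; case: (P y).
Qed.

Definition dot (R : pzSemiRingType) (J : finType) (u w : J -> R) : R :=
  \sum_j u j * w j.

Lemma dotC (R : comPzSemiRingType) (J : finType) (u w : J -> R) : dot u w = dot w u.
Proof. by apply: eq_bigr => j _; rewrite mulrC. Qed.

Section FrameOperator.
Variables (R : comPzRingType) (I J : finType) (u : I -> J -> R).

Definition frame_op (p q : J) : R := \sum_z u z p * u z q.

Lemma sum_frame_op_mul (K : J -> J -> R) :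
  \sum_p \sum_q frame_op p q * K p q = \sum_z \sum_p \sum_q u z p * u z q * K p q.
Proof.
under eq_bigr => p _ do under eq_bigr => q _ do rewrite /frame_op mulr_suml.
by under eq_bigr => p _ do rewrite exchange_big; rewrite exchange_big.
Qed.

Lemma frame_op_contract (a b : J -> R) :
  \sum_p \sum_q frame_op p q * (a p * b q) = \sum_z dot (u z) a * dot (u z) b.
Proof.
rewrite sum_frame_op_mul; apply: eq_bigr => z _; rewrite /dot big_distrlr /=.
by apply: eq_bigr => p _; apply: eq_bigr => q _; ring.
Qed.

Lemma sum_frame_op_sqr :
  \sum_p \sum_q frame_op p q ^+ 2 = \sum_z \sum_w dot (u z) (u w) ^+ 2.
Proof.
under eq_bigr => p _ do under eq_bigr => q _ do rewrite expr2.
rewrite sum_frame_op_mul; apply: eq_bigr => z _.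
under eq_bigr => p _ do under eq_bigr => q _ do rewrite mulrC.
by rewrite frame_op_contract; apply: eq_bigr => w _; rewrite dotC expr2.
Qed.

End FrameOperator.

Section IsotropicTensor.
Variables (R : comPzRingType) (n : nat).
Implicit Types (u w x y : 'I_n -> R) (p q : 'I_n * 'I_n).

Definition tensor2 u p : R := u p.1 * u p.2.

(* [c * iso4] is the fourth moment tensor of a spherical 4-design. *)
Definition iso4 p q : R :=
  (p.1 == p.2)%:R * (q.1 == q.2)%:R + (q == p)%:R + (q == (p.2, p.1))%:R.

Lemma dot_tensor2 u w : dot (tensor2 u) (tensor2 w) = dot u w ^+ 2.
Proof.
rewrite /dot sum_pair expr2 big_distrlr /=.
by apply: eq_bigr => a _; apply: eq_bigr => b _; rewrite /tensor2 /=; ring.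
Qed.

Lemma sum_iso4_mul p (F : 'I_n * 'I_n -> R) :
  \sum_q iso4 p q * F q = (p.1 == p.2)%:R * \sum_a F (a, a) + F p + F (p.2, p.1).
Proof.
rewrite /iso4; under eq_bigr => q _ do rewrite !mulrDl.
rewrite !big_split /= !sum_delta; congr (_ + _ + _).
rewrite mulr_sumr sum_pair /=; apply: eq_bigr => a _.
rewrite -(sum_delta a (fun b => (p.1 == p.2)%:R * F (a, b))) /=.
by apply: eq_bigr => b _; rewrite [_ == a]eq_sym; ring.
Qed.

Lemma iso4_contract x y :
  \sum_p \sum_q iso4 p q * (tensor2 x p * tensor2 y q) =
  dot x x * dot y y + 2%:R * dot x y ^+ 2.
Proof.
transitivity (\sum_p tensor2 x p * \sum_q iso4 p q * tensor2 y q).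
  by apply: eq_bigr => p _; rewrite mulr_sumr; apply: eq_bigr => q _; ring.
under eq_bigr => p _ do rewrite sum_iso4_mul !mulrDr.
rewrite !big_split /=.
have -> : \sum_p tensor2 x p * tensor2 y (p.2, p.1) = dot x y ^+ 2.
  by rewrite -dot_tensor2; apply: eq_bigr => -[a b] _; rewrite /tensor2 /=; ring.
have -> : \sum_p tensor2 x p * ((p.1 == p.2)%:R * \sum_a tensor2 y (a, a)) =
          dot x x * dot y y.
  rewrite sum_pair /dot mulr_suml; apply: eq_bigr => a _.
  rewrite -(sum_delta a (fun b => tensor2 x (a, b) * \sum_c tensor2 y (c, c))).
  by apply: eq_bigr => b _; rewrite /tensor2 /= [_ == a]eq_sym mulrCA.
by rewrite -/(dot (tensor2 x) (tensor2 y)) dot_tensor2; ring.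
Qed.

Lemma sum_iso4_sqr : \sum_p \sum_q iso4 p q ^+ 2 = (3 * n ^ 2 + 6 * n)%:R.
Proof.
have row p : \sum_q iso4 p q ^+ 2 = (n + 6)%:R * (p.1 == p.2)%:R + 2%:R.
  case: p => a b; under eq_bigr => q _ do rewrite expr2.
  rewrite sum_iso4_mul /iso4 /= !xpair_eqE.
  case: (eqVneq a b) => [<-|ab]; last by rewrite !eqxx /=; ring.
  under eq_bigr => c _ do rewrite xpair_eqE andbb eqxx mul1r.
  rewrite !eqxx !big_split /= sum_delta1 sumr_const card_ord natrD; ring.
under eq_bigr => p _ do rewrite row.
rewrite big_split /= -mulr_sumr sumr_const card_prod card_ord sum_pair.
under eq_bigr => a _ do under eq_bigr => b _ do rewrite /= eq_sym.
under eq_bigr => a _ do rewrite sum_delta1.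
rewrite sumr_const card_ord -mulr_natr !natrD !natrM; ring.
Qed.

End IsotropicTensor.

Arguments iso4 {R n} p q.

Section FourthMoment.
Variables (R : comPzRingType) (I : finType) (n : nat) (v : I -> 'I_n -> R).

Definition moment4 := frame_op (fun z => tensor2 (v z)).

Lemma sum_moment4_iso4_sqr (c : R) :
  \sum_p \sum_q (moment4 p q - c * iso4 p q) ^+ 2 =
  \sum_z \sum_w dot (v z) (v w) ^+ 4 - 6%:R * c * \sum_z dot (v z) (v z) ^+ 2
  + c ^+ 2 * (3 * n ^ 2 + 6 * n)%:R.
Proof.
have sqr : \sum_p \sum_q moment4 p q ^+ 2 = \sum_z \sum_w dot (v z) (v w) ^+ 4.
  rewrite sum_frame_op_sqr; apply: eq_bigr => z _; apply: eq_bigr => w _.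
  by rewrite dot_tensor2 -exprM.
have mix : \sum_p \sum_q moment4 p q * iso4 p q = 3%:R * \sum_z dot (v z) (v z) ^+ 2.
  rewrite sum_frame_op_mul mulr_sumr; apply: eq_bigr => z _.
  under eq_bigr => p _ do under eq_bigr => q _ do rewrite mulrC.
  by rewrite iso4_contract; ring.
transitivity (\sum_p \sum_q moment4 p q ^+ 2
  - 2%:R * c * \sum_p \sum_q moment4 p q * iso4 p q
  + c ^+ 2 * \sum_(p : 'I_n * 'I_n) \sum_q iso4 p q ^+ 2).
  rewrite !mulr_sumr -!sumrB -big_split /=.
  apply: eq_bigr => p _; rewrite !mulr_sumr -!sumrB -big_split /=.
  by apply: eq_bigr => q _; ring.
by rewrite sqr mix sum_iso4_sqr; ring.
Qed.

End FourthMoment.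

Lemma design4_of_frame_potential (R : realDomainType) (I : finType) (n : nat)
    (v : I -> 'I_n -> R) (c : R) :
  \sum_z \sum_w dot (v z) (v w) ^+ 4 - 6%:R * c * \sum_z dot (v z) (v z) ^+ 2
    + c ^+ 2 * (3 * n ^ 2 + 6 * n)%:R = 0 ->
  forall x y, \sum_z dot (v z) x ^+ 2 * dot (v z) y ^+ 2 =
              c * (dot x x * dot y y + 2%:R * dot x y ^+ 2).
Proof.
rewrite -sum_moment4_iso4_sqr => dev0 x y.
have moment4E p q : moment4 v p q = c * iso4 p q.
  apply/eqP; rewrite -subr_eq0 -sqrf_eq0; apply/eqP.
  have row0 p' : \sum_q (moment4 v p' q - c * iso4 p' q) ^+ 2 = 0.
    apply: (psumr_eq0P _ dev0) => // p'' _; apply: sumr_ge0 => q' _; apply: sqr_ge0.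
  by apply: (psumr_eq0P _ (row0 p)) => // q' _; apply: sqr_ge0.
transitivity (\sum_p \sum_q moment4 v p q * (tensor2 x p * tensor2 y q)).
  by rewrite frame_op_contract; apply: eq_bigr => z _; rewrite !dot_tensor2.
rewrite -iso4_contract mulr_sumr; apply: eq_bigr => p _.
by rewrite mulr_sumr; apply: eq_bigr => q _; rewrite moment4E -mulrA.
Qed.

Lemma mulmx_tr_scalar (R : fieldType) n (M : 'M[R]_n) (k : R) :
  k != 0 -> M *m M^T = k%:M -> M^T *m M = k%:M.
Proof.
move=> k0 MMt; have : M *m (k^-1 *: M^T) = 1%:M.
  by rewrite -scalemxAr MMt scale_scalar_mx mulVf.
move/mulmx1C; rewrite -scalemxAl => /(congr1 ( *:%R k)).
by rewrite scalerA mulfV // scale1r scalemx1.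
Qed.

Lemma sum_dot_row_sqr (R : comPzRingType) m n (M : 'M[R]_(m, n)) (k : R)
    (u : 'I_n -> R) :
  M^T *m M = k%:M -> \sum_r dot (fun a => M r a) u ^+ 2 = k * dot u u.
Proof.
move=> MtM; under eq_bigr => r _ do rewrite expr2.
rewrite -frame_op_contract /dot mulr_sumr; apply: eq_bigr => p _.
rewrite -(sum_delta p (fun q => k * (u p * u q))); apply: eq_bigr => q _.
have /= := congr1 (fun A : 'M[R]_n => A p q) MtM; rewrite !mxE => MtMpq.
rewrite (_ : frame_op _ p q = k * (q == p)%:R); first by ring.
by rewrite [_ == p]eq_sym mulr_natr -MtMpq; apply: eq_bigr => r _; rewrite mxE.
Qed.

Lemma sqr_of_mul_sign (R : fieldType) (k x : R) :
  k != 0 -> k * x \in [:: 1; -1; 0] -> x ^+ 2 = (x != 0)%:R / k ^+ 2.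
Proof.
move=> k0; set t := k * x; have -> : x = t / k by rewrite /t; field.
rewrite !inE => /or3P[] /eqP ->.
- by rewrite mul1r invr_eq0 k0 exprVn mul1r.
- by rewrite mulN1r oppr_eq0 invr_eq0 k0 sqrrN exprVn mul1r.
- by rewrite mul0r eqxx expr0n mul0r.
Qed.

Lemma card_Yidx : #|{: Yidx}| = 256%N.
Proof. by rewrite card_sum card_prod !card_ord. Qed.

Section OrthogonalityGraph.
Variables (R : rcfType) (W : 'I_15 -> 'M[R]_16).
Hypothesis HW : mutually_unbiased_weighing 15 16 9 W.

Definition yv (z : Yidx) (a : 'I_16) : R := Yvec W z 0 a.
Local Notation d z w := (dot (yv z) (yv w)).

Lemma dotv_Yvec x y : dotv (Yvec W x) (Yvec W y) = d x y.
Proof. by rewrite /dotv mxE; apply: eq_bigr => a _; rewrite mxE. Qed.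

Lemma dot_yv_inl r u : dot (yv (inl r)) u = u r.
Proof. by rewrite -(sum_delta r u); apply: eq_bigr => a _; rewrite /yv !mxE eq_sym. Qed.

Lemma dot_yv_inr i r j s :
  d (inr (i, r)) (inr (j, s)) = 9%:R^-1 * (W i *m (W j)^T) r s.
Proof.
rewrite mxE mulr_sumr; apply: eq_bigr => a _; rewrite /yv !mxE.
by rewrite (_ : 9%:R = 3%:R * 3%:R :> R) ?invfM -?natrM //; ring.
Qed.

Lemma Ydot_diag z : d z z = 1.
Proof.
case: z => [r|[i r]]; first by rewrite dot_yv_inl /yv !mxE eqxx.
by rewrite dot_yv_inr (proj2 (proj1 HW i)) mxE eqxx mulr1n mulVf // pnatr_eq0.
Qed.

Lemma Ydot_offdiag z w : z != w -> 3%:R * d z w \in [:: 1; -1; 0].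
Proof.
have n3 : (3%:R : R) != 0 by rewrite pnatr_eq0.
have e9 : (9%:R : R) = 3%:R ^+ 2 by rewrite -natrX.
have dot_inl r j s : 3%:R * d (inl r) (inr (j, s)) \in [:: 1; -1; 0].
  by rewrite dot_yv_inl /yv !mxE mulrA mulfV // mul1r; apply: (proj1 (proj1 HW j)).
case: z => [r|[i r]]; case: w => [s|[j s]] zw.
- have sr : s != r by apply: contraNneq zw => ->.
  by rewrite dot_yv_inl /yv !mxE (negbTE sr) mulr0 !inE eqxx !orbT.
- exact: dot_inl.
- by rewrite dotC; apply: dot_inl.
rewrite dot_yv_inr; case: (eqVneq i j) zw => [<- zw|ij _].
  have rs : r != s by apply: contraNneq zw => ->.
  by rewrite (proj2 (proj1 HW i)) mxE (negbTE rs) mulr0n !mulr0 !inE eqxx !orbT.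
have := proj1 (proj2 HW i j ij) r s; rewrite mxE e9 sqrtr_sqr ger0_norm ?ler0n //.
by rewrite mulrA (_ : 3%:R * (3%:R ^+ 2)^-1 = 3%:R^-1) //; field.
Qed.

Lemma Yvec_inj : injective (Yvec W).
Proof.
move=> x y exy; apply/eqP; apply: contraT => xy.
have := sqr_of_mul_sign _ (Ydot_offdiag xy); rewrite pnatr_eq0 => /(_ isT).
rewrite -dotv_Yvec -exy dotv_Yvec Ydot_diag oner_eq0 expr1n mul1r => /esym/eqP.
by rewrite invr_eq1 -natrX pnatr_eq1.
Qed.

(* The last term vanishes off the diagonal and compensates [1 - 9] on it. *)
Lemma Yorth_natr z w : (Yorth W z w)%:R = 1 - 9%:R * d z w ^+ 2 + 8%:R * (w == z)%:R.
Proof.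
rewrite /Yorth (inj_eq Yvec_inj) dotv_Yvec.
have [<-|zw] := eqVneq z w; first by rewrite Ydot_diag /=; ring.
rewrite (sqr_of_mul_sign _ (Ydot_offdiag zw)) ?pnatr_eq0 //.
rewrite -natrX mulrC divfK ?pnatr_eq0 //.
by case: (d z w == 0) => /=; ring.
Qed.

Lemma Ydot4 z w : d z w ^+ 4 = 9%:R^-1 * d z w ^+ 2 + 8%:R / 9%:R * (w == z)%:R.
Proof.
have n9 : (9%:R : R) != 0 by rewrite pnatr_eq0.
have [<-|zw] := eqVneq z w; first by rewrite Ydot_diag /=; field.
rewrite -[4%N]/(2 * 2)%N exprM (sqr_of_mul_sign _ (Ydot_offdiag zw)) ?pnatr_eq0 //.
by rewrite -natrX; case: (d z w != 0) => /=; field.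
Qed.

Lemma sum_Ydot_sqr u : \sum_z dot (yv z) u ^+ 2 = 16%:R * dot u u.
Proof.
rewrite big_sumType sum_pair /=.
have -> : \sum_r dot (yv (inl r)) u ^+ 2 = dot u u.
  by apply: eq_bigr => r _; rewrite dot_yv_inl expr2.
have basis i : \sum_r dot (yv (inr (i, r))) u ^+ 2 = dot u u.
  rewrite -[RHS]mul1r -(@sum_dot_row_sqr _ _ _ (3%:R^-1 *: W i)).
    by apply: eq_bigr => r _; congr (_ ^+ 2); apply: eq_bigr => a _; rewrite /yv !mxE.
  rewrite linearZ /= [(_ *: _)^T]linearZ /= -scalemxAl scalerA.
  rewrite (mulmx_tr_scalar _ (proj2 (proj1 HW i))) ?pnatr_eq0 // scale_scalar_mx.
  by congr (_%:M); rewrite -invfM -natrM mulVf ?pnatr_eq0.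
under eq_bigr => i _ do rewrite basis.
by rewrite sumr_const card_ord -mulr_natl; ring.
Qed.

Lemma Y_design u u' :
  \sum_z dot (yv z) u ^+ 2 * dot (yv z) u' ^+ 2 =
  8%:R / 9%:R * (dot u u * dot u' u' + 2%:R * dot u u' ^+ 2).
Proof.
apply: design4_of_frame_potential.
under eq_bigr => z _ do under eq_bigr => w _ do rewrite Ydot4 (dotC (yv z)).
under eq_bigr => z _ do rewrite big_split /= -!mulr_sumr sum_Ydot_sqr Ydot_diag sum_delta1.
under [X in _ - _ * X + _]eq_bigr => z _ do rewrite Ydot_diag.
by rewrite !sumr_const card_Yidx; field.
Qed.

Lemma card_Yorth_neighbours x : #|[set y | Yorth W x y]| = 120%N.
Proof.
apply/eqP; rewrite -(eqr_nat R) natr_card_set; apply/eqP.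
under eq_bigr => y _ do rewrite Yorth_natr dotC.
rewrite !big_split /= sumrN -!mulr_sumr sumr_const card_Yidx.
by rewrite sum_Ydot_sqr Ydot_diag sum_delta1; ring.
Qed.

Lemma card_Yorth_common x y :
  x != y -> #|[set z | Yorth W x z && Yorth W y z]| = 56%N.
Proof.
move=> xy; apply/eqP; rewrite -(eqr_nat R) natr_card_set; apply/eqP.
pose a z := 1 - 9%:R * d z x ^+ 2; pose b z := 1 - 9%:R * d z y ^+ 2.
have -> : \sum_z (Yorth W x z && Yorth W y z)%:R =
          \sum_z a z * b z + 8%:R * b x + 8%:R * (a y + 8%:R * (y == x)%:R).
  rewrite -[8%:R * b x](sum_delta x (fun z => 8%:R * b z)).
  rewrite -[8%:R * (_ + _)](sum_delta y (fun z => 8%:R * (a z + 8%:R * (z == x)%:R))).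
  rewrite -!big_split /=; apply: eq_bigr => z _.
  by rewrite -mulnb natrM !Yorth_natr /a /b (dotC (yv x)) (dotC (yv y)); ring.
have -> : \sum_z a z * b z = \sum_(z : Yidx) (1 : R) - 9%:R * \sum_z d z x ^+ 2
    - 9%:R * \sum_z d z y ^+ 2 + 81%:R * \sum_z d z x ^+ 2 * d z y ^+ 2.
  rewrite !mulr_sumr -!sumrB -!big_split /=; apply: eq_bigr => z _; rewrite /a /b; ring.
rewrite !sum_Ydot_sqr Y_design sumr_const card_Yidx /a /b !Ydot_diag (dotC (yv y)).
by rewrite eq_sym (negbTE xy) mulr0 addr0; field.
Qed.

End OrthogonalityGraph.

Theorem mainTheorem13 (R : rcfType) (W : 'I_15 -> 'M[R]_16) :
  mutually_unbiased_weighing 15 16 9 W ->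
  injective (Yvec W) /\ srg (Yorth W) 256 120 56 56.
Proof.
move=> HW; split; first exact: Yvec_inj HW.
split.
- by move=> x; rewrite /Yorth eqxx.
- by move=> x y; rewrite /Yorth eq_sym !dotv_Yvec dotC.
- exact: card_Yidx.
- exact: card_Yorth_neighbours HW.
- by move=> x y xy; rewrite if_same; apply: card_Yorth_common.
Qed.
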